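(* For every formula $F$ of $\mathcal{L}$: if $F$ is valid in every neighbourhood model, then $F$ is derivable in the axiom system of $\mathbb{PCL}$.
   Context: Formulas: $\mathcal{L} ::= p \mid \bot \mid A\wedge B \mid A\lor B \mid A\rightarrow B \mid A>B$. The axiom system of $\mathbb{PCL}$ is classical propositional logic plus the rules (RCEA) from $A\leftrightarrow B$ infer $(A>C)\leftrightarrow(B>C)$; (RCK) from $A\rightarrow B$ infer $(C>A)\rightarrow(C>B)$, and the axioms (ID) $A>A$; (R-And) $(A>B)\wedge(A>C)\rightarrow(A>(B\wedge C))$; (CM) $(A>B)\wedge(A>C)\rightarrow((A\wedge B)>C)$; (OR) $(A>C)\wedge(B>C)\rightarrow((A\lor B)>C)$. A neighbourhood model is $\langle W,N,\llbracket\cdot\rrbracket\rangle$ with $W\neq\emptyset$, $N:W\to\mathcal{P}(\mathcal{P}(W))$ such that every $\alpha\in N(x)$ is non-empty, and a valuation of atoms. Forcing is classical for Boolean connectives, and $x\Vdash A>B$ iff for all $\alpha\in N(x)$, if some $y\in\alpha$ forces $A$, then there is $\beta\in N(x)$ with $\beta\subseteq\alpha$ such that some $y\in\beta$ forces $A$ and every $y\in\beta$ forces $A\to B$. Valid = forced at every world. *)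

From Stdlib Require Import Bool.

Inductive form : Type :=
| Atom : nat -> form
| Bot : form
| And : form -> form -> form
| Or : form -> form -> form
| Imp : form -> form -> form
| Cond : form -> form -> form.

Definition Iff (A B : form) : form := And (Imp A B) (Imp B A).

(* Classical propositional logic: every substitution instance of a
   propositional tautology is an axiom.  A formula is such an instance iff
   it is true under every Boolean valuation that is classical on the
   Boolean connectives (treating atoms and conditionals A > B as
   propositional letters). *)
Definition classical_valuation (v : form -> bool) : Prop :=
  v Bot = false /\
  (forall A B, v (And A B) = v A && v B) /\
  (forall A B, v (Or A B) = v A || v B) /\
  (forall A B, v (Imp A B) = implb (v A) (v B)).

Definition tautology (F : form) : Prop :=
  forall v, classical_valuation v -> v F = true.

Inductive PCL : form -> Prop :=
| PCL_taut F : tautology F -> PCL F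
| PCL_MP A B : PCL (Imp A B) -> PCL A -> PCL B
| PCL_RCEA A B C : PCL (Iff A B) -> PCL (Iff (Cond A C) (Cond B C))
| PCL_RCK A B C : PCL (Imp A B) -> PCL (Imp (Cond C A) (Cond C B))
| PCL_ID A : PCL (Cond A A)
| PCL_RAnd A B C :
    PCL (Imp (And (Cond A B) (Cond A C)) (Cond A (And B C)))
| PCL_CM A B C :
    PCL (Imp (And (Cond A B) (Cond A C)) (Cond (And A B) C))
| PCL_OR A B C :
    PCL (Imp (And (Cond A C) (Cond B C)) (Cond (Or A B) C)).

Record nmodel : Type := {
  world : Type;
  world_inhabited : inhabited world;
  nbhd : world -> (world -> Prop) -> Prop;
  nbhd_nonempty : forall x alpha, nbhd x alpha -> exists y, alpha y;
  val : nat -> world -> Prop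
}.

Fixpoint forces (M : nmodel) (x : world M) (F : form) {struct F} : Prop :=
  match F with
  | Atom p => val M p x
  | Bot => False
  | And A B => forces M x A /\ forces M x B
  | Or A B => forces M x A \/ forces M x B
  | Imp A B => forces M x A -> forces M x B
  | Cond A B =>
      forall alpha, nbhd M x alpha ->
        (exists y, alpha y /\ forces M y A) ->
        exists beta, nbhd M x beta /\ (forall z, beta z -> alpha z) /\
          (exists y, beta y /\ forces M y A) /\
          (forall y, beta y -> forces M y A -> forces M y B)
  end.

Definition valid (F : form) : Prop :=
  forall (M : nmodel) (x : world M), forces M x F.

From Stdlib Require Import Bool List Arith Lia Classical Cantor.
Import ListNotations.

(* Completeness by a canonical model.  A world is a maximal consistent set m
   together with a formula b.  Relative to a maximal consistent set x, call
   (m, b) a state if m contains every B with b > B in x, and let t precede s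
   if (b_t \/ b_s) > b_t is in x while b_s is not in m_t.  The neighbourhoods
   of x are the cones {s} U {t | t precedes s} of states s.  CM, OR and RCEA
   make precedence transitive, so cones are nested; and every state of a cone
   containing A lies above an A-minimal state whose set contains all the
   A-conditionals of x, which yields the truth lemma for A > B. *)

Definition Neg (A : form) : form := Imp A Bot.
Definition Top : form := Imp Bot Bot.

Fixpoint conj (L : list form) : form :=
  match L with [] => Top | A :: L => And A (conj L) end.

Ltac taut :=
  let v := fresh "v" in let Hv := fresh "Hv" in
  let H0 := fresh "H0" in let HA := fresh "HA" in
  let HO := fresh "HO" in let HI := fresh "HI" in
  unfold tautology; intros v Hv; destruct Hv as (H0 & HA & HO & HI);
  simpl conj in *; unfold Iff, Neg, Top in *;
  repeat first [rewrite HI | rewrite HA | rewrite HO | rewrite H0];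
  repeat match goal with |- context [v ?X] => destruct (v X) end; reflexivity.

Lemma PCL_taut_mp A B : tautology (Imp A B) -> PCL A -> PCL B.
Proof. intros HT HA. exact (PCL_MP A B (PCL_taut _ HT) HA). Qed.

Lemma PCL_taut_mp2 A B C :
  tautology (Imp A (Imp B C)) -> PCL A -> PCL B -> PCL C.
Proof. intros HT HA HB. exact (PCL_MP B C (PCL_taut_mp _ _ HT HA) HB). Qed.

Lemma conj_true v L : classical_valuation v ->
  v (conj L) = true <-> forall A, In A L -> v A = true.
Proof.
  intros (H0 & HA & _ & HI).
  induction L as [|B L IH]; simpl.
  - unfold Top; rewrite HI, H0. split; [intros _ A []|reflexivity].
  - rewrite HA, andb_true_iff, IH. split.
    + intros [HB HL] A [<-|HAL]; auto.
    + intros H; split; auto.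
Qed.

Lemma conj_incl_taut L L' : incl L L' -> tautology (Imp (conj L') (conj L)).
Proof.
  intros Hincl v Hv. pose proof (proj2 (conj_true v L Hv)) as HL.
  pose proof (proj1 (conj_true v L' Hv)) as HL'.
  destruct Hv as (_ & _ & _ & HI). rewrite HI.
  destruct (v (conj L')) eqn:E; [|reflexivity].
  rewrite HL; [reflexivity|]. intros A HA. apply HL'; auto.
Qed.

(** * Maximal consistent sets *)

Definition consistent (G : form -> Prop) : Prop :=
  forall L, (forall A, In A L -> G A) -> ~ PCL (Neg (conj L)).

Definition maximal_consistent (G : form -> Prop) : Prop :=
  consistent G /\ forall A, G A \/ G (Neg A).

Definition add (G : form -> Prop) (a : form) : form -> Prop :=
  fun A => G A \/ A = a.

Lemma consistent_sub (G H : form -> Prop) :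
  (forall A, H A -> G A) -> consistent G -> consistent H.
Proof. intros Hsub HG L HL. apply HG. intros A HA; apply Hsub, HL, HA. Qed.

Lemma list_add_split G a L : (forall A, In A L -> add G a A) ->
  exists L', (forall A, In A L' -> G A) /\ incl L (a :: L').
Proof.
  induction L as [|B L IH]; intros HL.
  - exists []. split; [intros A []|intros A []].
  - destruct IH as (L' & HL' & Hincl); [intros A HA; apply HL; right; exact HA|].
    destruct (HL B (or_introl eq_refl)) as [HB| ->].
    + exists (B :: L'). split; [intros A [<-|HA]; auto|].
      intros A [<-|HA]; [right; left; reflexivity|].
      destruct (Hincl A HA) as [<-|HA']; [left|right; right]; auto.
    + exists L'. split; [exact HL'|]. intros A [<-|HA]; [left|]; auto.
Qed.

Lemma not_consistent_add G a : ~ consistent (add G a) ->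
  exists L, (forall A, In A L -> G A) /\ PCL (Imp (conj L) (Neg a)).
Proof.
  intros Hn. apply not_all_ex_not in Hn as [L Hn].
  apply imply_to_and in Hn as [HL HP]. apply NNPP in HP.
  destruct (list_add_split G a L HL) as (L' & HL' & Hincl).
  exists L'. split; [exact HL'|].
  eapply PCL_taut_mp2; [|apply PCL_taut, (conj_incl_taut _ _ Hincl)|exact HP].
  taut.
Qed.

Lemma consistent_add_or_neg G A : consistent G ->
  consistent (add G A) \/ consistent (add G (Neg A)).
Proof.
  intros HG. apply NNPP. intros Hn. apply not_or_and in Hn as [H1 H2].
  destruct (not_consistent_add _ _ H1) as (L1 & HL1 & HP1).
  destruct (not_consistent_add _ _ H2) as (L2 & HL2 & HP2).
  apply (HG (L1 ++ L2)).
  - intros B HB. apply in_app_or in HB as [HB|HB]; auto.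
  - assert (tautology (Imp (conj (L1 ++ L2)) (conj L1))) as T1
      by (apply conj_incl_taut, incl_appl, incl_refl).
    assert (tautology (Imp (conj (L1 ++ L2)) (conj L2))) as T2
      by (apply conj_incl_taut, incl_appr, incl_refl).
    assert (tautology (Imp (Imp (conj L1) (Neg A)) (Imp (Imp (conj L2) (Neg (Neg A)))
      (Imp (Imp (conj (L1 ++ L2)) (conj L1)) (Imp (Imp (conj (L1 ++ L2)) (conj L2))
        (Neg (conj (L1 ++ L2)))))))) as T by taut.
    apply PCL_taut in T, T1, T2.
    exact (PCL_MP _ _ (PCL_MP _ _ (PCL_MP _ _ (PCL_MP _ _ T HP1) HP2) T1) T2).
Qed.

Opaque to_nat of_nat.

Fixpoint form_code (A : form) : nat :=
  match A with
  | Atom p => to_nat (0, p)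
  | Bot => to_nat (1, 0)
  | And A B => to_nat (2, to_nat (form_code A, form_code B))
  | Or A B => to_nat (3, to_nat (form_code A, form_code B))
  | Imp A B => to_nat (4, to_nat (form_code A, form_code B))
  | Cond A B => to_nat (5, to_nat (form_code A, form_code B))
  end.

(* The fuel [f] only has to exceed the code, since [to_nat] is inflationary. *)
Fixpoint form_decode (f n : nat) : form :=
  match f with
  | 0 => Bot
  | S f =>
    let (t, r) := of_nat n in
    let (a, b) := of_nat r in
    match t with
    | 0 => Atom r
    | 1 => Bot
    | 2 => And (form_decode f a) (form_decode f b)
    | 3 => Or (form_decode f a) (form_decode f b)
    | 4 => Imp (form_decode f a) (form_decode f b)
    | _ => Cond (form_decode f a) (form_decode f b)
    end
  end.

Lemma form_decode_code A f : form_code A < f -> form_decode f (form_code A) = A.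
Proof.
  revert f; induction A; intros f Hf; destruct f as [|f]; try lia;
    simpl form_decode; simpl form_code; rewrite cancel_of_to.
  1: destruct (of_nat n); reflexivity.
  1: destruct (of_nat 0); reflexivity.
  all: simpl form_code in Hf;
    pose proof (to_nat_non_decreasing (form_code A1) (form_code A2));
    match type of Hf with to_nat (?k, ?r) < _ => pose proof (to_nat_non_decreasing k r) end;
    rewrite cancel_of_to, IHA1, IHA2 by lia; reflexivity.
Qed.

Definition enum (n : nat) : form := form_decode (S n) n.

Lemma enum_form_code A : enum (form_code A) = A.
Proof. apply form_decode_code. lia. Qed.

Definition extend (G : form -> Prop) (a : form) : form -> Prop :=
  fun A => G A \/ (consistent (add G a) /\ A = a) \/
           (~ consistent (add G a) /\ A = Neg a).

Lemma consistent_extend G a : consistent G -> consistent (extend G a).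
Proof.
  intros HG. destruct (classic (consistent (add G a))) as [Hc|Hc].
  - eapply consistent_sub; [|exact Hc].
    intros A [HA|[[_ HA]|[Hn _]]]; [left|right|contradiction]; auto.
  - destruct (consistent_add_or_neg G a HG) as [H|H]; [contradiction|].
    eapply consistent_sub; [|exact H].
    intros A [HA|[[Hn _]|[_ HA]]]; [left|contradiction|right]; auto.
Qed.

Lemma extend_decides G a : extend G a a \/ extend G a (Neg a).
Proof. unfold extend. tauto. Qed.

Fixpoint lindenbaum_chain (G : form -> Prop) (n : nat) : form -> Prop :=
  match n with
  | 0 => G
  | S n => extend (lindenbaum_chain G n) (enum n)
  end.

Lemma lindenbaum_chain_mono G n m A :
  n <= m -> lindenbaum_chain G n A -> lindenbaum_chain G m A.
Proof. induction 1; simpl; unfold extend; auto. Qed.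

Lemma consistent_lindenbaum_chain G n :
  consistent G -> consistent (lindenbaum_chain G n).
Proof. intros HG. induction n as [|n IH]; [exact HG|apply consistent_extend, IH]. Qed.

Lemma lindenbaum_chain_list G L :
  (forall A, In A L -> exists n, lindenbaum_chain G n A) ->
  exists n, forall A, In A L -> lindenbaum_chain G n A.
Proof.
  induction L as [|B L IH]; intros HL.
  - exists 0. intros A [].
  - destruct IH as [n Hn]; [intros A HA; apply HL; right; exact HA|].
    destruct (HL B (or_introl eq_refl)) as [k Hk].
    exists (max n k). intros A [<-|HA].
    + apply (lindenbaum_chain_mono G k); [lia|exact Hk].
    + apply (lindenbaum_chain_mono G n); [lia|apply Hn, HA].
Qed.

Lemma lindenbaum G : consistent G ->
  exists D, maximal_consistent D /\ forall A, G A -> D A.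
Proof.
  intros HG. exists (fun A => exists n, lindenbaum_chain G n A).
  split; [split|].
  - intros L HL. destruct (lindenbaum_chain_list G L HL) as [n Hn].
    exact (consistent_lindenbaum_chain G n HG L Hn).
  - intros A. rewrite <- (enum_form_code A).
    destruct (extend_decides (lindenbaum_chain G (form_code A)) (enum (form_code A)))
      as [H|H]; [left|right]; exists (S (form_code A)); exact H.
  - intros A HA. exists 0. exact HA.
Qed.

Section MaximalConsistent.

Variable G : form -> Prop.
Hypothesis HG : maximal_consistent G.

Lemma mcs_derive L B : (forall A, In A L -> G A) -> PCL (Imp (conj L) B) -> G B.
Proof.
  intros HL HP. destruct HG as [HC HM]. destruct (HM B) as [HB|HB]; [exact HB|].
  exfalso. apply (HC (Neg B :: L)); [intros A [<-|HA]; auto|].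
  eapply PCL_taut_mp; [|exact HP]. taut.
Qed.

Lemma mcs_PCL B : PCL B -> G B.
Proof.
  intros HB. apply (mcs_derive []); [intros A []|].
  eapply PCL_taut_mp; [|exact HB]. taut.
Qed.

Lemma mcs_taut_mp A B : tautology (Imp A B) -> G A -> G B.
Proof.
  intros HT HA. apply (mcs_derive [A]); [intros C [<-|[]]; exact HA|].
  eapply PCL_taut_mp; [|apply PCL_taut, HT]. taut.
Qed.

Lemma mcs_mp A B : G (Imp A B) -> G A -> G B.
Proof.
  intros HAB HA. apply (mcs_derive [Imp A B; A]); [intros C [<-|[<-|[]]]; auto|].
  apply PCL_taut. taut.
Qed.

Lemma mcs_bot : ~ G Bot.
Proof.
  intros H. apply (proj1 HG [Bot]); [intros A [<-|[]]; exact H|].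
  apply PCL_taut. taut.
Qed.

Lemma mcs_neg A : G (Neg A) -> ~ G A.
Proof. intros HnA HA. exact (mcs_bot (mcs_mp _ _ HnA HA)). Qed.

Lemma mcs_and A B : G (And A B) <-> G A /\ G B.
Proof.
  split.
  - intros H. split; eapply mcs_taut_mp; try exact H; taut.
  - intros [HA HB]. apply (mcs_derive [A; B]); [intros C [<-|[<-|[]]]; auto|].
    apply PCL_taut. taut.
Qed.

Lemma mcs_or A B : G (Or A B) <-> G A \/ G B.
Proof.
  split.
  - intros H. destruct (proj2 HG A) as [HA|HnA]; [left; exact HA|right].
    apply (mcs_derive [Or A B; Neg A]); [intros C [<-|[<-|[]]]; auto|].
    apply PCL_taut. taut.
  - intros [H|H]; eapply mcs_taut_mp; try exact H; taut.
Qed.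

Lemma mcs_imp A B : G (Imp A B) <-> (G A -> G B).
Proof.
  split; [apply mcs_mp|]. intros H.
  destruct (proj2 HG A) as [HA|HnA].
  - apply (mcs_taut_mp B); [taut|exact (H HA)].
  - apply (mcs_taut_mp (Neg A)); [taut|exact HnA].
Qed.

End MaximalConsistent.

(* PCL is consistent: every theorem is true when all conditionals are. *)
Fixpoint cond_true_val (F : form) : bool :=
  match F with
  | Atom _ | Bot => false
  | And A B => cond_true_val A && cond_true_val B
  | Or A B => cond_true_val A || cond_true_val B
  | Imp A B => implb (cond_true_val A) (cond_true_val B)
  | Cond _ _ => true
  end.

Lemma PCL_cond_true_val F : PCL F -> cond_true_val F = true.
Proof.
  induction 1; simpl; auto.
  - apply H. repeat split.
  - simpl in IHPCL1. rewrite IHPCL2 in IHPCL1. exact IHPCL1.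
Qed.

Lemma maximal_consistent_exists : exists G, maximal_consistent G.
Proof.
  destruct (lindenbaum (fun _ => False)) as [D [HD _]]; [|exists D; exact HD].
  intros [|A L] HL HP; [|exact (HL A (or_introl eq_refl))].
  discriminate (PCL_cond_true_val _ HP).
Qed.

(** * Conditionals in a maximal consistent set *)

Section Conditionals.

Variable x : form -> Prop.
Hypothesis Hx : maximal_consistent x.

Lemma cond_refl A : x (Cond A A).
Proof. apply mcs_PCL; [exact Hx|apply PCL_ID]. Qed.

Lemma cond_weaken A B B' : PCL (Imp B B') -> x (Cond A B) -> x (Cond A B').
Proof. intros HP. apply mcs_mp; [exact Hx|]. apply mcs_PCL; [exact Hx|apply PCL_RCK, HP]. Qed.

Lemma cond_weaken_taut A B B' : tautology (Imp B B') -> x (Cond A B) -> x (Cond A B').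
Proof. intros HT. apply cond_weaken, PCL_taut, HT. Qed.

Lemma cond_of_taut A B : tautology (Imp A B) -> x (Cond A B).
Proof. intros HT. apply (cond_weaken_taut A A); [exact HT|apply cond_refl]. Qed.

Lemma cond_equiv A A' B : PCL (Iff A A') -> x (Cond A B) -> x (Cond A' B).
Proof.
  intros HP. apply mcs_mp; [exact Hx|].
  apply (mcs_taut_mp x Hx (Iff (Cond A B) (Cond A' B))); [taut|].
  apply mcs_PCL; [exact Hx|apply PCL_RCEA, HP].
Qed.

Lemma cond_equiv_taut A A' B : tautology (Iff A A') -> x (Cond A B) -> x (Cond A' B).
Proof. intros HT. apply cond_equiv, PCL_taut, HT. Qed.

Lemma cond_and A B C : x (Cond A B) -> x (Cond A C) -> x (Cond A (And B C)).
Proof.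
  intros HB HC. apply (mcs_mp x Hx (And (Cond A B) (Cond A C))).
  - apply mcs_PCL; [exact Hx|apply PCL_RAnd].
  - apply mcs_and; auto.
Qed.

Lemma cond_cm A B C : x (Cond A B) -> x (Cond A C) -> x (Cond (And A B) C).
Proof.
  intros HB HC. apply (mcs_mp x Hx (And (Cond A B) (Cond A C))).
  - apply mcs_PCL; [exact Hx|apply PCL_CM].
  - apply mcs_and; auto.
Qed.

Lemma cond_or A B C : x (Cond A C) -> x (Cond B C) -> x (Cond (Or A B) C).
Proof.
  intros HA HB. apply (mcs_mp x Hx (And (Cond A C) (Cond B C))).
  - apply mcs_PCL; [exact Hx|apply PCL_OR].
  - apply mcs_and; auto.
Qed.

(* Split A into A /\ B and A /\ ~B; on the second part B -> C holds trivially. *)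
Lemma cond_cut A B C : x (Cond A B) -> x (Cond (And A B) C) -> x (Cond A C).
Proof.
  intros HB HC.
  assert (x (Cond (And A B) (Imp B C))) as H1 by (eapply cond_weaken_taut; [|exact HC]; taut).
  assert (x (Cond (And A (Neg B)) (Imp B C))) as H2 by (apply cond_of_taut; taut).
  assert (x (Cond A (Imp B C))) as H3
    by (eapply cond_equiv_taut; [|exact (cond_or _ _ _ H1 H2)]; taut).
  eapply cond_weaken_taut; [|exact (cond_and _ _ _ HB H3)]. taut.
Qed.

Lemma cond_conj A L : (forall B, In B L -> x (Cond A B)) -> x (Cond A (conj L)).
Proof.
  induction L as [|B L IH]; intros HL; simpl.
  - apply cond_of_taut. taut.
  - apply cond_and; [apply HL; left; reflexivity|].
    apply IH. intros C HC. apply HL. right. exact HC.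
Qed.

Lemma cond_or_imp A B X : x (Cond A B) -> x (Cond (Or A X) (Imp A B)).
Proof.
  intros HB.
  assert (x (Cond A (Imp A B))) as H1 by (eapply cond_weaken_taut; [|exact HB]; taut).
  assert (x (Cond (And X (Neg A)) (Imp A B))) as H2 by (apply cond_of_taut; taut).
  eapply cond_equiv_taut; [|exact (cond_or _ _ _ H1 H2)]. taut.
Qed.

Definition normal (m : form -> Prop) (A : form) : Prop :=
  forall B, x (Cond A B) -> m B.

Definition preceq (a b : form) : Prop := x (Cond (Or a b) a).

Lemma preceq_or_l A b : preceq (Or A b) b.
Proof. apply cond_of_taut. taut. Qed.

Lemma cond_or3_of_preceq a b g :
  preceq a b -> preceq b g -> x (Cond (Or a (Or b g)) a).
Proof.
  unfold preceq. intros Hab Hbg.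
  assert (x (Cond (Or b g) (Or a b))) as H1 by (eapply cond_weaken_taut; [|exact Hbg]; taut).
  assert (x (Cond (Or a (Or b g)) (Or a b))) as H2
    by (eapply cond_equiv_taut; [|exact (cond_or _ _ _ (cond_refl _) H1)]; taut).
  apply (cond_cut _ _ _ H2). eapply cond_equiv_taut; [|exact Hab]. taut.
Qed.

Lemma preceq_trans a b g : preceq a b -> preceq b g -> preceq a g.
Proof.
  intros Hab Hbg. pose proof (cond_or3_of_preceq a b g Hab Hbg) as H.
  assert (x (Cond (Or a (Or b g)) (Or a g))) as H' by (eapply cond_weaken_taut; [|exact H]; taut).
  eapply cond_equiv_taut; [|exact (cond_cm _ _ _ H' H)]. taut.
Qed.

Lemma preceq_cond_imp a b g : preceq a b -> preceq b g -> x (Cond a (Imp g b)).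
Proof.
  intros Hab Hbg. pose proof (cond_or3_of_preceq a b g Hab Hbg) as H.
  assert (x (Cond (And a (Neg g)) (Imp g b))) as H1 by (apply cond_of_taut; taut).
  assert (x (Cond (Or b g) (Imp g b))) as H2 by (eapply cond_weaken_taut; [|exact Hbg]; taut).
  assert (x (Cond (Or a (Or b g)) (Imp g b))) as H3
    by (eapply cond_equiv_taut; [|exact (cond_or _ _ _ H1 H2)]; taut).
  eapply cond_equiv_taut; [|exact (cond_cm _ _ _ H H3)]. taut.
Qed.

Lemma normal_lift m D X : normal m D -> x (Cond X D) -> PCL (Imp D X) -> normal m X.
Proof.
  intros Hm HXD HP C HXC. apply Hm.
  eapply cond_equiv; [|exact (cond_cm _ _ _ HXD HXC)].
  eapply PCL_taut_mp; [|exact HP]. taut.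
Qed.

Lemma normal_or_mem m A X :
  maximal_consistent m -> normal m (Or A X) -> m A -> normal m A.
Proof.
  intros Hm Hn HA B HB. apply (mcs_mp m Hm A); [|exact HA].
  apply Hn, cond_or_imp, HB.
Qed.

Lemma exists_normal A B : ~ x (Cond A B) ->
  exists m, maximal_consistent m /\ normal m A /\ ~ m B.
Proof.
  intros HnB.
  destruct (lindenbaum (add (fun C => x (Cond A C)) (Neg B))) as (m & Hm & Hsub).
  - apply NNPP. intros Hc. apply HnB.
    destruct (not_consistent_add _ _ Hc) as (L & HL & HP).
    eapply cond_weaken; [|exact (cond_conj A L HL)].
    eapply PCL_taut_mp; [|exact HP]. taut.
  - exists m. split; [exact Hm|split].
    + intros C HC. apply Hsub. left. exact HC.
    + apply (mcs_neg m Hm). apply Hsub. right. reflexivity.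
Qed.

End Conditionals.

(** * The canonical model *)

Record cworld : Type := CWorld {
  theory : form -> Prop;
  theory_mcs : maximal_consistent theory;
  label : form
}.

Section Cones.

Variable x : form -> Prop.
Hypothesis Hx : maximal_consistent x.

Definition state (s : cworld) : Prop := normal x (theory s) (label s).

Definition prec (t s : cworld) : Prop :=
  preceq x (label t) (label s) /\ ~ theory t (label s).

Definition cone (s t : cworld) : Prop := state t /\ (t = s \/ prec t s).

Lemma prec_trans v u t : state v -> prec v u -> prec u t -> prec v t.
Proof.
  intros Hv [Hvu Hnu] [Hut Hnt]. split.
  - exact (preceq_trans x Hx _ _ _ Hvu Hut).
  - intros Ht. apply Hnu.
    apply (mcs_mp _ (theory_mcs v) (label t)); [|exact Ht].
    apply Hv, (preceq_cond_imp x Hx _ _ _ Hvu Hut).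
Qed.

Lemma cone_refl s : state s -> cone s s.
Proof. intros Hs. split; [exact Hs|left; reflexivity]. Qed.

Lemma cone_trans s t v : cone s t -> cone t v -> cone s v.
Proof.
  intros [Ht [->|Hts]] [Hv [->|Hvt]]; split; auto.
  right. exact (prec_trans _ _ _ Hv Hvt Hts).
Qed.

(* If (A \/ b) > b is in x, then t itself is A-minimal; otherwise a world
   normal for A \/ b but without b lies strictly below t. *)
Lemma exists_minimal_state t A : state t -> theory t A ->
  exists u, cone t u /\ theory u A /\ normal x (theory u) A /\
    forall v, state v -> prec v u -> ~ theory v A.
Proof.
  intros Ht HA. set (b := label t).
  destruct (classic (x (Cond (Or A b) b))) as [Hb|Hb].
  - exists t. split; [apply cone_refl, Ht|split; [exact HA|split]].
    + apply (normal_or_mem x Hx _ _ b (theory_mcs t)); [|exact HA].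
      apply (normal_lift x Hx _ b); [exact Ht|exact Hb|]. apply PCL_taut. taut.
    + intros v Hv [Hvt Hnv] HvA. apply Hnv.
      assert (preceq x b (Or A b)) as Hb'.
      { unfold preceq. eapply cond_equiv_taut; [exact Hx| |exact Hb]. taut. }
      apply (mcs_mp _ (theory_mcs v) (Or A b)).
      * apply Hv, (preceq_cond_imp x Hx _ _ _ Hvt Hb').
      * apply mcs_or; [apply theory_mcs|left; exact HvA].
  - destruct (exists_normal x Hx _ _ Hb) as (n & Hn & Hnn & Hnb).
    assert (n A) as HnA.
    { destruct (proj1 (mcs_or n Hn A b) (Hnn _ (cond_refl x Hx _))) as [H|H];
        [exact H|contradiction]. }
    exists (CWorld n Hn (Or A b)). split; [split|split; [exact HnA|split]].
    + exact Hnn.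
    + right. split; [apply preceq_or_l, Hx|exact Hnb].
    + exact (normal_or_mem x Hx _ _ b Hn Hnn HnA).
    + intros v Hv [_ Hnv] HvA. apply Hnv. apply mcs_or; [apply theory_mcs|left; exact HvA].
Qed.

Lemma cone_refine s y A B : x (Cond A B) -> cone s y -> theory y A ->
  exists u, cone s u /\ theory u A /\
    forall z, cone u z -> theory z A -> theory z B.
Proof.
  intros HAB Hsy HyA.
  destruct (exists_minimal_state y A (proj1 Hsy) HyA) as (u & Hyu & HuA & Hun & Hmin).
  exists u. split; [exact (cone_trans _ _ _ Hsy Hyu)|split; [exact HuA|]].
  intros z [Hz [->|Hzu]] HzA.
  - exact (Hun B HAB).
  - exfalso. exact (Hmin z Hz Hzu HzA).
Qed.

Lemma cone_counterexample A B : ~ x (Cond A B) ->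
  exists s, state s /\ theory s A /\
    forall t, cone s t -> theory t A -> ~ theory t B.
Proof.
  intros HnB. destruct (exists_normal x Hx _ _ HnB) as (m & Hm & Hmn & HmB).
  exists (CWorld m Hm A). split; [exact Hmn|split; [exact (Hmn _ (cond_refl x Hx A))|]].
  intros t [_ [->|[_ HtA]]] HA; [exact HmB|contradiction].
Qed.

End Cones.

Definition canonical_nbhd (w : cworld) (alpha : cworld -> Prop) : Prop :=
  exists s, state (theory w) s /\ forall t, alpha t <-> cone (theory w) s t.

Lemma canonical_nbhd_nonempty w alpha : canonical_nbhd w alpha -> exists t, alpha t.
Proof.
  intros (s & Hs & Halpha). exists s. apply Halpha, cone_refl, Hs.
Qed.

Lemma cworld_inhabited : inhabited cworld.
Proof.
  destruct maximal_consistent_exists as [G HG]. exact (inhabits (CWorld G HG Bot)).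
Qed.

Definition canonical_model : nmodel := {|
  world := cworld;
  world_inhabited := cworld_inhabited;
  nbhd := canonical_nbhd;
  nbhd_nonempty := canonical_nbhd_nonempty;
  val := fun p w => theory w (Atom p)
|}.

Lemma truth_lemma F (w : cworld) : forces canonical_model w F <-> theory w F.
Proof.
  revert w.
  induction F as [p| |A IHA B IHB|A IHA B IHB|A IHA B IHB|A IHA B IHB]; intros w;
    pose proof (theory_mcs w) as Hw; simpl.
  - reflexivity.
  - split; [contradiction|apply mcs_bot, Hw].
  - rewrite IHA, IHB, mcs_and by exact Hw. reflexivity.
  - rewrite IHA, IHB, mcs_or by exact Hw. reflexivity.
  - rewrite IHA, IHB, mcs_imp by exact Hw. reflexivity.
  - set (x := theory w) in *. split.
    + intros Hf. apply NNPP. intros HnB.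
      destruct (cone_counterexample x Hw A B HnB) as (s & Hs & HsA & Hcone).
      destruct (Hf (cone x s)) as (beta & Hbeta & Hsub & (y & Hy & HyA) & Hall).
      * exists s. split; [exact Hs|reflexivity].
      * exists s. split; [apply cone_refl, Hs|apply IHA, HsA].
      * apply (Hcone y (Hsub y Hy)); [apply IHA, HyA|apply IHB, Hall; assumption].
    + intros HAB alpha (s & Hs & Halpha) (y & Hy & HyA).
      destruct (cone_refine x Hw s y A B HAB (proj1 (Halpha y) Hy) (proj1 (IHA y) HyA))
        as (u & Hsu & HuA & HuB).
      exists (cone x u). split; [|split; [|split]].
      * exists u. split; [exact (proj1 Hsu)|reflexivity].
      * intros z Hz. apply Halpha. exact (cone_trans x Hw _ _ _ Hsu Hz).
      * exists u. split; [apply cone_refl, Hsu|apply IHA, HuA].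
      * intros z Hz HzA. apply IHB, HuB; [exact Hz|apply IHA, HzA].
Qed.

Lemma consistent_neg_unprovable F : ~ PCL F -> consistent (add (fun _ => False) (Neg F)).
Proof.
  intros HnF. apply NNPP. intros Hc. apply HnF.
  destruct (not_consistent_add _ _ Hc) as ([|A L] & HL & HP);
    [|destruct (HL A (or_introl eq_refl))].
  eapply PCL_taut_mp; [|exact HP]. taut.
Qed.

Theorem mainTheorem2 : forall F : form, valid F -> PCL F.
Proof.
  intros F HF. apply NNPP. intros HnF.
  destruct (lindenbaum _ (consistent_neg_unprovable F HnF)) as (G & HG & HnG).
  apply (mcs_neg G HG F).
  - apply HnG. right. reflexivity.
  - apply (truth_lemma F (CWorld G HG Bot)), HF.
Qed.
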